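(* Let the setting described in the context hold, and assume conditions (A)(i)–(iii) and (P), with $L_F^2\eta_k<1-\eta_F$ for all $k\ge1$. Assume $\lim_{\delta\to0^+}\lambda_k^\delta=\lambda_k^0$ for each $k$. Assume the stopping index $k(\delta)$ satisfies $\lim_{\delta\to0^+}k(\delta)=\infty$ and $\lim_{\delta\to0^+}\delta^2\sum_{i=1}^{k(\delta)}\eta_i=0$. Take the radius \[ \rho^2=e^{n\sum_{j=1}^{k(\delta)}c_j^\delta}\Big(\|x_1-x^\dagger\|^2+(C_{max}+\delta)^2+n\delta^2\sum_{j=1}^{k(\delta)}d_j\Big)-(C_{max}+\delta)^2, \] where \[ c_j^\delta=2\eta_j\lambda_j^\delta\max(1,L_G^2)\big(\tfrac32+2\eta_j\lambda_j^\delta L_G^2\big),\qquad d_j=\frac{(1+\eta_F)^2}{2(1-L_F^2\eta_j-\eta_F)}\eta_j . \] Then for every $k\le k(\delta)$, the data-driven SGD iterate $x_k^\delta$ lies in $\mathcal{B}_\rho(x^\dagger)$.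
   Context: Setting. $X,Y$ are real Hilbert spaces and $n\ge1$. $Y^n$ is the product Hilbert space. $F_i:\mathcal{D}(F_i)\subset X\to Y$ and $G_i:X\to Y$ for $i=1,\dots,n$, with $F(x)=n^{-1/2}(F_i(x))_i$ and $G(x)=n^{-1/2}(G_i(x))_i$. Data. The exact data are $y^\dagger=n^{-1/2}(y_i^\dagger)_i$ and the noisy data $y^\delta=n^{-1/2}(y_i^\delta)_i$, with $\|y^\delta-y^\dagger\|\le\delta$. Reference solution. $x_1$ is a deterministic initial guess, and $x^\dagger$ is the solution of $F(x)=y^\dagger$ of minimal distance to $x_1$. Algorithm. $x_1^\delta=x_1$, and \[ x_{k+1}^\delta=x_k^\delta-\eta_k\big(F_{i_k}'(x_k^\delta)^*(F_{i_k}(x_k^\delta)-y^\delta_{i_k})+\lambda_k^\delta G_{i_k}'(x_k^\delta)^*(G_{i_k}(x_k^\delta)-y^\delta_{i_k})\big), \] with $i_k$ drawn uniformly and independently from $\{1,\dots,n\}$, $\eta_k>0$ and $\lambda_k^\delta>0$. (A) On the closed ball $\mathcal{B}_\rho(x^\dagger)\subset\bigcap_i\mathcal{D}(F_i)$ the following hold. (i) $F_i$ and $G_i$ have continuous Fréchet derivatives bounded by $L_F$ and $L_G$. (ii) There is $\eta_F\in[0,1)$ with $\|F_i(x)-F_i(\tilde x)-F_i'(\tilde x)(x-\tilde x)\|\le\eta_F\|F_i(x)-F_i(\tilde x)\|$. (iii) $C_{min}\le\|G(x^* )-y^\dagger\|\le C_{max}$ for every solution $x^*\in\mathcal{B}_\rho(x^\dagger)$,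 with $0<C_{min}\le C_{max}$. (P) $L_F^2\eta_k<1$, $\sum_k\eta_k=\infty$, and $\sum_k\eta_k\lambda_k^\delta<\infty$. *)

From HB Require Import structures.
From mathcomp Require Import all_boot all_order all_algebra.
From mathcomp Require Import all_classical all_reals all_analysis.
Set Implicit Arguments. Unset Strict Implicit. Unset Printing Implicit Defensive.
Import Order.TTheory GRing.Theory Num.Theory.
Import numFieldNormedType.Exports.
Local Open Scope classical_set_scope.
Local Open Scope ring_scope.

(* ip is an inner product on V inducing the norm of V (so a complete V is a
   real Hilbert space). *)
Definition inner_product_of (R : realType) (V : normedModType R)
  (ip : V -> V -> R) : Prop :=
  [/\ (forall u v, ip u v = ip v u),
      (forall (a : R) u v w, ip (a *: u + v) w = a * ip u w + ip v w)
    & (forall u, ip u u = `|u| ^+ 2)].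

Definition is_adjoint (R : realType) (X Y : normedModType R)
  (ipX : X -> X -> R) (ipY : Y -> Y -> R) (L : X -> Y) (A : Y -> X) : Prop :=
  forall h y, ipY (L h) y = ipX h (A y).

Definition cball (R : realType) (X : normedModType R) (c : X) (rho : R) : set X :=
  [set x | `|x - c| <= rho].

Definition C1_bounded_on (R : realType) (X Y : normedModType R)
  (f : X -> Y) (B : set X) (L : R) : Prop :=
  [/\ (forall x, B x -> differentiable f x),
      (forall x, B x -> forall h, `|'d f x h| <= L * `|h|)
    & (forall x, B x -> forall e : R, 0 < e -> exists2 d : R, 0 < d &
          forall x', B x' -> `|x' - x| < d ->
            forall h, `|'d f x' h - 'd f x h| <= e * `|h|)].

Definition pnorm (R : realType) (Y : normedModType R) (n : nat)
  (v : 'I_n -> Y) : R :=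
  Num.sqrt ((n%:R)^-1 * \sum_(i < n) `|v i| ^+ 2).

(* The data-driven SGD iterates; sgd k = x_k for k >= 1 (sgd 0 = x_1 is junk).
   Fadj i x, Gadj i x are (the adjoints of) F_i'(x)^*, G_i'(x)^*. *)
Fixpoint sgd (R : realType) (X Y : normedModType R) (n : nat)
  (F G : 'I_n -> X -> Y) (Fadj Gadj : 'I_n -> X -> Y -> X)
  (yd : 'I_n -> Y) (eta lam : nat -> R) (ik : nat -> 'I_n) (x1 : X)
  (k : nat) : X :=
  match k with
  | 0 => x1
  | k'.+1 =>
    if k' == 0%N then x1 else
    let x := sgd F G Fadj Gadj yd eta lam ik x1 k' in
    let i := ik k' in
    x - eta k' *: (Fadj i x (F i x - yd i) + lam k' *: Gadj i x (G i x - yd i))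
  end.

Definition c_coef (R : realType) (eta lam : nat -> R) (LG : R) (j : nat) : R :=
  2 * eta j * lam j * Num.max 1 (LG ^+ 2) * (3 / 2 + 2 * eta j * lam j * LG ^+ 2).

Definition d_coef (R : realType) (eta : nat -> R) (LF etaF : R) (j : nat) : R :=
  (1 + etaF) ^+ 2 / (2 * (1 - LF ^+ 2 * eta j - etaF)) * eta j.

Definition rho_sq (R : realType) (n : nat) (eta lam : nat -> R)
  (LF LG etaF Cmax delta dist1 : R) (K : nat) : R :=
  expR (n%:R * \sum_(1 <= j < K.+1) c_coef eta lam LG j) *
    (dist1 ^+ 2 + (Cmax + delta) ^+ 2
       + n%:R * delta ^+ 2 * \sum_(1 <= j < K.+1) d_coef eta LF etaF j)
  - (Cmax + delta) ^+ 2.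

(* One step from an iterate x in the ball splits into a Landweber part and a
   penalty part.  By the tangential cone condition and completing a square,
   the Landweber part decreases |x - x^dagger|^2 up to an error
   d_j |y^delta_i - y^dagger_i|^2 <= n delta^2 d_j.  Since
   |G_i(x) - y^delta_i| <= L_G |x - x^dagger| + sqrt n (C_max + delta), the
   penalty part at most multiplies |x - x^dagger|^2 + (C_max + delta)^2 by
   1 + n c_j.  A discrete Gronwall argument then bounds
   |x_k - x^dagger|^2 + (C_max + delta)^2 by rho^2 + (C_max + delta)^2 for
   k <= k(delta); this keeps every iterate inside B_rho(x^dagger), where (A)
   is available, so the induction closes. *)

From HB Require Import structures.
From mathcomp Require Import all_boot all_order all_algebra.
From mathcomp Require Import all_classical all_reals all_analysis.
From mathcomp Require Import ring lra.
Set Implicit Arguments. Unset Strict Implicit. Unset Printing Implicit Defensive.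
Import Order.TTheory GRing.Theory Num.Theory.
Import numFieldNormedType.Exports.
Local Open Scope classical_set_scope.
Local Open Scope ring_scope.

Section InnerProduct.
Variables (R : realType) (V : normedModType R) (ip : V -> V -> R).
Hypothesis ip_of : inner_product_of ip.

Lemma ipC u v : ip u v = ip v u. Proof. by case: ip_of. Qed.
Lemma ip_norm u : ip u u = `|u| ^+ 2. Proof. by case: ip_of. Qed.

Lemma ipDZl a u v w : ip (a *: u + v) w = a * ip u w + ip v w.
Proof. by case: ip_of. Qed.

Lemma ip0l w : ip 0 w = 0.
Proof. by have := ipDZl 1 0 0 w; rewrite scaler0 addr0 mul1r; lra. Qed.

Lemma ipZl a u w : ip (a *: u) w = a * ip u w.
Proof. by have := ipDZl a u 0 w; rewrite !addr0 ip0l addr0. Qed.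

Lemma ipDl u v w : ip (u + v) w = ip u w + ip v w.
Proof. by have := ipDZl 1 u v w; rewrite scale1r mul1r. Qed.

Lemma ipNl u w : ip (- u) w = - ip u w.
Proof. by rewrite -scaleN1r ipZl mulN1r. Qed.

Lemma ipBl u v w : ip (u - v) w = ip u w - ip v w.
Proof. by rewrite ipDl ipNl. Qed.

Lemma ipZr a u w : ip w (a *: u) = a * ip w u.
Proof. by rewrite ipC ipZl ipC. Qed.

Lemma ipBr u v w : ip w (u - v) = ip w u - ip w v.
Proof. by rewrite ipC ipBl !(ipC w). Qed.

Lemma normB_sqr u w : `|u - w| ^+ 2 = `|u| ^+ 2 - 2 * ip u w + `|w| ^+ 2.
Proof. by rewrite -!ip_norm ipBl !ipBr (ipC w u); ring. Qed.

Lemma ip_sqr_le u v : ip u v ^+ 2 <= `|u| ^+ 2 * `|v| ^+ 2.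
Proof.
have [->|v0] := eqVneq v 0.
  by rewrite -(scale0r 0) ipZr mul0r scale0r normr0 expr0n mulr0.
set p := ip u v.
have := normB_sqr (`|v| ^+ 2 *: u) (p *: v).
rewrite ipZl ipZr !normrZ !exprMn !real_normK ?num_real // -/p => E.
have : 0 <= `|v| ^+ 2 * (`|u| ^+ 2 * `|v| ^+ 2 - p ^+ 2).
  by have := sqr_ge0 (`| (`|v| ^+ 2 *: u - p *: v) |); rewrite E; lra.
by rewrite pmulr_rge0 ?subr_ge0 // exprn_gt0 // normr_gt0.
Qed.

Lemma normr_ip_le u v : `|ip u v| <= `|u| * `|v|.
Proof.
rewrite -ler_sqr ?nnegrE ?mulr_ge0 // real_normK ?num_real // exprMn.
exact: ip_sqr_le.
Qed.

Lemma ip_le u v : ip u v <= `|u| * `|v|.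
Proof. exact: le_trans (ler_norm _) (normr_ip_le u v). Qed.

Lemma ip_ge u v : - (`|u| * `|v|) <= ip u v.
Proof. by have := ip_le (- u) v; rewrite ipNl normrN; lra. Qed.

Lemma ip_cvgl {T} {F : set_system T} {FF : Filter F} (q : T -> V) l v :
  q @ F --> l -> (fun s => ip (q s) v) @ F --> ip l v.
Proof.
move=> ql; apply/cvgrPdist_le => e e0.
have [->|v0] := eqVneq v 0.
  near=> s; rewrite -(scale0r 0) !ipZr !mul0r subrr normr0; exact: ltW.
have nv : 0 < `|v| by rewrite normr_gt0.
move/cvgrPdist_le: ql => /(_ (e / `|v|)) /(_ (divr_gt0 e0 nv)).
apply: filterS => s hs.
rewrite -ipBl; apply: le_trans (normr_ip_le _ _) _.
by rewrite -ler_pdivlMr.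
Unshelve. all: by end_near.
Qed.

Lemma adjoint_sqr_norm_le (W : normedModType R) (ipW : W -> W -> R)
    (A : W -> V) (Aa : V -> W) (L : R) :
  inner_product_of ipW -> is_adjoint ipW ip A Aa ->
  (forall h, `|A h| <= L * `|h|) -> forall r, `|Aa r| ^+ 2 <= L ^+ 2 * `|r| ^+ 2.
Proof.
move=> [_ _ ipW_norm] adj bnd r.
have : `|Aa r| ^+ 2 <= L * `|Aa r| * `|r|.
  rewrite -ipW_norm -adj; apply: le_trans (ip_le _ _) _.
  by rewrite ler_wpM2r.
have := normr_ge0 (Aa r); have := normr_ge0 r; nra.
Qed.

Lemma normB_step_sqr_le (e a b : V) (eta lam : R) :
  `|e - eta *: (a + lam *: b)| ^+ 2 <=
    `|e| ^+ 2 + (2 * eta ^+ 2 * `|a| ^+ 2 - 2 * eta * ip e a)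
              + (2 * (eta * lam) ^+ 2 * `|b| ^+ 2 - 2 * (eta * lam) * ip e b).
Proof.
rewrite normB_sqr ipZr (ipC e) ipDl ipZl !(ipC _ e) normrZ exprMn real_normK ?num_real //.
have sum_sqr : `|a + lam *: b| ^+ 2 <= 2 * `|a| ^+ 2 + 2 * lam ^+ 2 * `|b| ^+ 2.
  have le_sum : `|a + lam *: b| <= `|a| + `|lam| * `|b| by rewrite -normrZ ler_normD.
  rewrite -(real_normK (num_real lam)).
  have := normr_ge0 (a + lam *: b); have := sqr_ge0 (`|a| - `|lam| * `|b|); nra.
have := ler_wpM2l (sqr_ge0 eta) sum_sqr; lra.
Qed.
End InnerProduct.

Lemma mean_value_le (R : realType) (X Y : normedModType R) (ipY : Y -> Y -> R)
    (G : X -> Y) (c x : X) (L : R) :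
  inner_product_of ipY ->
  (forall t, 0 <= t <= 1 -> differentiable G (t *: (x - c) + c)) ->
  (forall t, 0 <= t <= 1 -> forall h, `|'d G (t *: (x - c) + c) h| <= L * `|h|) ->
  `|G x - G c| <= L * `|x - c|.
Proof.
move=> HY dG bG.
(* Testing against [v := G x - G c] reduces to the scalar mean value theorem. *)
set h := x - c; set p := fun t : R => t *: h + c.
set v := G x - G c; set psi := fun t => ipY (G (p t)) v.
have psi_derive (t : R) : 0 <= t <= 1 -> is_derive t 1 psi (ipY ('d G (p t) h) v).
  move=> t01; have dGt : derivable G (p t) h by apply/diff_derivable/dG.
  have quotE : (fun s : R => s^-1 *: ((psi \o shift t) (s *: 1) - psi t)) =
               (fun s => ipY (s^-1 *: ((G \o shift (p t)) (s *: h) - G (p t))) v).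
    apply: funext => s /=; rewrite (ipZl HY) (ipBl HY) /psi /p.
    by rewrite /= [s *: 1]mulr1 scalerDl addrA.
  have cv : (fun s : R => s^-1 *: ((psi \o shift t) (s *: 1) - psi t)) @ 0^'
             --> ipY ('d G (p t) h) v.
    rewrite quotE -(@deriveE _ _ _ G (p t) h); last exact: dG.
    exact: (ip_cvgl HY dGt).
  by split; [apply/cvgP: cv | rewrite /derive; apply: cvg_lim].
have [t0 t0I E] : exists2 t0, t0 \in `[0, 1]%R &
    psi 1 - psi 0 = ipY ('d G (p t0) h) v * (1 - 0).
  apply: MVT_segment => //.
    by move=> t; rewrite in_itv /= => /andP[t0 t1]; apply: psi_derive; rewrite !ltW.
  apply: derivable_within_continuous => t; rewrite in_itv /= => t01.
  by have [] := psi_derive t t01.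
move: E; rewrite subr0 mulr1 /psi /p scale1r scale0r add0r subrK -(ipBl HY) -/v.
rewrite (ip_norm HY) => vE.
have t01 : 0 <= t0 <= 1 by move: t0I; rewrite in_itv.
have : `|v| ^+ 2 <= L * `|h| * `|v|.
  by rewrite vE; apply: le_trans (ip_le HY _ _) _; rewrite ler_wpM2r // bG.
have := le_trans (normr_ge0 _) (bG t0 t01 h).
have := normr_ge0 v; nra.
Qed.

Lemma landweber_term_le (R : realType) (X Y : normedModType R)
    (ipX : X -> X -> R) (ipY : Y -> Y -> R) (A : X -> Y) (Aa : Y -> X)
    (e : X) (r nu : Y) (eta etaF LF : R) :
  inner_product_of ipX -> inner_product_of ipY -> is_adjoint ipX ipY A Aa ->
  (forall h, `|A h| <= LF * `|h|) ->
  0 < eta -> 0 <= etaF -> LF ^+ 2 * eta < 1 - etaF ->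
  `|A e - (r + nu)| <= etaF * `|r + nu| ->
  2 * eta ^+ 2 * `|Aa r| ^+ 2 - 2 * eta * ipX e (Aa r)
    <= (1 + etaF) ^+ 2 / (2 * (1 - LF ^+ 2 * eta - etaF)) * eta * `|nu| ^+ 2.
Proof.
move=> HX HY adj bndA eta_gt0 etaF_ge0 small cone.
have Aa_le := adjoint_sqr_norm_le HY HX adj bndA r.
rewrite -adj; set z := r + nu; set a := 1 - LF ^+ 2 * eta - etaF.
have a_gt0 : 0 < a by rewrite /a; lra.
have ip_lb : `|r| ^+ 2 - (etaF * (`|r| + `|nu|) + `|nu|) * `|r| <= ipY (A e) r.
  have -> : A e = (A e - z) + r + nu by rewrite -addrA subrK.
  rewrite 2!(ipDl HY) (ip_norm HY).
  have : `|A e - z| * `|r| <= etaF * (`|r| + `|nu|) * `|r|.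
    by rewrite ler_wpM2r // (le_trans cone) // ler_wpM2l // ler_normD.
  have := ip_ge HY (A e - z) r; have := ip_ge HY nu r; lra.
have sq : 0 <= eta / (2 * a) * (2 * a * `|r| - (1 + etaF) * `|nu|) ^+ 2.
  by rewrite mulr_ge0 ?sqr_ge0 // divr_ge0 ?ltW // mulr_gt0.
have sqE : eta / (2 * a) * (2 * a * `|r| - (1 + etaF) * `|nu|) ^+ 2 =
    2 * eta * a * `|r| ^+ 2 - 2 * eta * (1 + etaF) * `|nu| * `|r|
    + (1 + etaF) ^+ 2 / (2 * a) * eta * `|nu| ^+ 2.
  by field; rewrite gt_eqF.
have := ler_wpM2l (ltW eta_gt0) ip_lb.
have := ler_wpM2l (sqr_ge0 eta) Aa_le.
rewrite sqE /a in sq *; lra.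
Qed.

Lemma penalty_term_le (R : realType) (X Y : normedModType R)
    (ipX : X -> X -> R) (ipY : Y -> Y -> R) (B : X -> Y) (Ba : Y -> X)
    (e : X) (s : Y) (eta lam L m C : R) :
  inner_product_of ipX -> inner_product_of ipY -> is_adjoint ipX ipY B Ba ->
  (forall h, `|B h| <= L * `|h|) ->
  0 < eta -> 0 < lam -> 0 <= L -> 0 <= m -> 1 <= m ^+ 2 -> 0 <= C ->
  `|s| <= L * `|e| + m * C ->
  2 * (eta * lam) ^+ 2 * `|Ba s| ^+ 2 - 2 * (eta * lam) * ipX e (Ba s)
    <= m ^+ 2 * (2 * eta * lam * Num.max 1 (L ^+ 2) * (3 / 2 + 2 * eta * lam * L ^+ 2))
         * (`|e| ^+ 2 + C ^+ 2).
Proof.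
move=> HX HY adj bndB eta_gt0 lam_gt0 L_ge0 m_ge0 m_ge1 C_ge0 s_le.
rewrite -adj; set q := eta * lam; set l := Num.max 1 (L ^+ 2).
set t := `|e|; set S := `|s|; set T := l * m ^+ 2 * (t ^+ 2 + C ^+ 2).
have Ba_le : `|Ba s| ^+ 2 <= L ^+ 2 * S ^+ 2 := adjoint_sqr_norm_le HY HX adj bndB s.
have q_gt0 : 0 < q by rewrite mulr_gt0.
have l_ge1 : 1 <= l by rewrite le_max lexx.
have L_le : L ^+ 2 <= l by rewrite le_max lexx orbT.
have t_ge0 : 0 <= t := normr_ge0 e.
have S_ge0 : 0 <= S := normr_ge0 s.
have ip_lb : - (L * t * S) <= ipY (B e) s.
  apply: le_trans (ip_ge HY _ _); rewrite lerN2 ler_wpM2r //.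
have sqr_le : L ^+ 2 * t ^+ 2 + m ^+ 2 * C ^+ 2 <= T.
  have lL : 0 <= l - L ^+ 2 by rewrite subr_ge0.
  have m1 : 0 <= m ^+ 2 - 1 by rewrite subr_ge0.
  have l1 : 0 <= l - 1 by rewrite subr_ge0.
  have := mulr_ge0 lL (sqr_ge0 t).
  have := mulr_ge0 m1 (mulr_ge0 (le_trans ler01 l_ge1) (sqr_ge0 t)).
  have := mulr_ge0 l1 (mulr_ge0 (sqr_ge0 m) (sqr_ge0 C)).
  rewrite /T; lra.
have LtS_le : L * t * S <= 3 / 2 * T.
  have : L * t * S <= L * t * (L * t + m * C) by rewrite ler_wpM2l ?mulr_ge0.
  have := sqr_ge0 (m * C); have := sqr_ge0 (L * t - m * C); lra.
have S2_le : S ^+ 2 <= 2 * T.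
  have : S ^+ 2 <= (L * t + m * C) ^+ 2.
    by rewrite ler_sqr ?nnegrE ?addr_ge0 ?mulr_ge0.
  have := sqr_ge0 (L * t - m * C); lra.
have := ler_wpM2l (ltW q_gt0) ip_lb.
have := ler_wpM2l (sqr_ge0 q) Ba_le.
have := ler_wpM2l (mulr_ge0 (sqr_ge0 q) (sqr_ge0 L)) S2_le.
have := ler_wpM2l (ltW q_gt0) LtS_le.
rewrite /T /q; lra.
Qed.

Lemma cball_center (R : realType) (X : normedModType R) (c : X) (r : R) :
  0 <= r -> cball c r c.
Proof. by rewrite /cball /= subrr normr0. Qed.

Lemma cball_segment (R : realType) (X : normedModType R) (c x : X) (r t : R) :
  cball c r x -> 0 <= t <= 1 -> cball c r (t *: (x - c) + c).
Proof.
rewrite /cball /= addrK normrZ => x_in /andP[t_ge0 t_le1].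
by rewrite ger0_norm // (le_trans _ x_in) // ler_piMl.
Qed.

Section PNorm.
Variables (R : realType) (Y : normedModType R) (n : nat).

Lemma pnorm_ge0 (v : 'I_n -> Y) : 0 <= pnorm v.
Proof. exact: sqrtr_ge0. Qed.

Lemma pnorm_coord_sqr_le (v : 'I_n -> Y) (c : R) i :
  pnorm v <= c -> `|v i| ^+ 2 <= n%:R * c ^+ 2.
Proof.
move=> v_le; have c_ge0 := le_trans (pnorm_ge0 v) v_le.
move: v_le; rewrite /pnorm -[c in _ <= c]ger0_norm // -sqrtr_sqr ler_sqrt ?sqr_ge0 //.
have n_gt0 : 0 < n%:R :> R by rewrite ltr0n (leq_ltn_trans _ (ltn_ord i)).
rewrite -(ler_pM2l n_gt0) mulrA mulfV ?gt_eqF // mul1r => /(le_trans _); apply.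
by rewrite (bigD1 i) //= lerDl sumr_ge0.
Qed.

Lemma pnorm_coord_le (v : 'I_n -> Y) (c : R) i :
  pnorm v <= c -> `|v i| <= Num.sqrt n%:R * c.
Proof.
move=> v_le; have c_ge0 := le_trans (pnorm_ge0 v) v_le.
rewrite -ler_sqr ?nnegrE ?mulr_ge0 ?sqrtr_ge0 // exprMn sqr_sqrtr ?ler0n //.
exact: pnorm_coord_sqr_le.
Qed.
End PNorm.

Definition gronwall_bound (R : realType) (a b : nat -> R) (e1 : R) (j : nat) : R :=
  expR (\sum_(1 <= i < j) a i) * (e1 + \sum_(1 <= i < j) b i).

Section DiscreteGronwall.
Variables (R : realType) (a b : nat -> R) (e1 : R).
Hypotheses (a_ge0 : forall i, (0 < i)%N -> 0 <= a i)
           (b_ge0 : forall i, (0 < i)%N -> 0 <= b i) (e1_ge0 : 0 <= e1).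
Local Notation Q := (gronwall_bound a b e1).

Let sum_ge0 (u : nat -> R) j :
  (forall i, (0 < i)%N -> 0 <= u i) -> 0 <= \sum_(1 <= i < j) u i.
Proof. by move=> u_ge0; rewrite big_nat_cond sumr_ge0 // => i /andP[/andP[/u_ge0]]. Qed.

Lemma gronwall_bound_ge0 j : 0 <= Q j.
Proof. by rewrite mulr_ge0 ?expR_ge0 ?addr_ge0 ?sum_ge0. Qed.

Lemma gronwall_boundS j : (0 < j)%N -> (1 + a j) * Q j + b j <= Q j.+1.
Proof.
move=> j_gt0; rewrite /gronwall_bound !big_nat_recr //= expRD addrA.
set S := \sum_(1 <= i < j) a i; set E := e1 + _.
have E_ge0 : 0 <= E by rewrite addr_ge0 ?sum_ge0.
have expS_ge1 : 1 <= expR S by rewrite (le_trans _ (expR_ge1Dx S)) // lerDl sum_ge0.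
have expa_ge : 1 + a j <= expR (a j) := expR_ge1Dx _.
have expa_ge1 : 1 <= expR (a j) by rewrite (le_trans _ expa_ge) // lerDl a_ge0.
have : 0 <= (expR (a j) - (1 + a j)) * (expR S * E).
  by rewrite mulr_ge0 ?subr_ge0 ?mulr_ge0 ?expR_ge0.
have : 0 <= (expR S * expR (a j) - 1) * b j.
  by rewrite mulr_ge0 ?subr_ge0 ?b_ge0 // -[1]mulr1 ler_pM.
lra.
Qed.

Lemma gronwall_bound_nondecreasing : nondecreasing_seq Q.
Proof.
apply/nondecreasing_seqP => -[|j]; first by rewrite /gronwall_bound !big_geq.
apply: le_trans (gronwall_boundS _) => //.
by have := gronwall_bound_ge0 j.+1; have := a_ge0 (ltn0Sn j); have := b_ge0 (ltn0Sn j); nra.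
Qed.

Lemma discrete_gronwall (E : nat -> R) (K : nat) : E 1%N <= e1 ->
    (forall j, (0 < j < K)%N -> E j <= Q j -> E j.+1 <= (1 + a j) * E j + b j) ->
  forall j, (0 < j <= K)%N -> E j <= Q j.
Proof.
move=> E1_le E_step; elim=> // -[_ _|j IH /andP[_ jK]].
  by rewrite /gronwall_bound !big_geq // expR0 mul1r addr0.
have E_le := IH (ltnW jK).
apply: le_trans (E_step j.+1 jK E_le) _; apply: le_trans (gronwall_boundS _) => //.
by rewrite lerD2r ler_wpM2l // addr_ge0 ?a_ge0.
Qed.
End DiscreteGronwall.

Lemma c_coef_ge0 (R : realType) (eta lam : nat -> R) (LG : R) j :
  0 < eta j -> 0 < lam j -> 0 <= c_coef eta lam LG j.
Proof.
move=> /ltW eta_ge0 /ltW lam_ge0.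
have max_ge0 : 0 <= Num.max 1 (LG ^+ 2) by rewrite le_max ler01.
by rewrite /c_coef !(sqr_ge0, mulr_ge0, addr_ge0).
Qed.

Lemma d_coef_ge0 (R : realType) (eta : nat -> R) (LF etaF : R) j :
  0 < eta j -> LF ^+ 2 * eta j < 1 - etaF -> 0 <= d_coef eta LF etaF j.
Proof.
move=> eta_gt0 small; rewrite /d_coef mulr_ge0 ?divr_ge0 ?sqr_ge0 ?ltW //.
by rewrite mulr_gt0 // subr_gt0 ltrBrDl addrC -ltrBrDl.
Qed.

Lemma rho_sqE (R : realType) n (eta lam : nat -> R) (LF LG etaF Cmax delta dist1 : R) K :
  rho_sq n eta lam LF LG etaF Cmax delta dist1 K =
  gronwall_bound (fun j => n%:R * c_coef eta lam LG j)
    (fun j => n%:R * delta ^+ 2 * d_coef eta LF etaF j)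
    (dist1 ^+ 2 + (Cmax + delta) ^+ 2) K.+1 - (Cmax + delta) ^+ 2.
Proof. by rewrite /rho_sq /gronwall_bound -!mulr_sumr. Qed.

Section SgdIterates.
Variables (R : realType) (X Y : normedModType R).
Variables (ipX : X -> X -> R) (ipY : Y -> Y -> R).
Variables (n : nat) (F G : 'I_n -> X -> Y) (Fadj Gadj : 'I_n -> X -> Y -> X).
Variables (ydag yd : 'I_n -> Y) (x1 xdag : X) (eta lam : nat -> R) (ik : nat -> 'I_n).
Variables (LF LG etaF Cmax delta rho : R) (K : nat).

Local Notation x_ := (sgd F G Fadj Gadj yd eta lam ik x1).
Local Notation B := (cball xdag rho).
Local Notation C := (Cmax + delta).

Lemma sgdS j : (0 < j)%N ->
  x_ j.+1 = x_ j - eta j *: (Fadj (ik j) (x_ j) (F (ik j) (x_ j) - yd (ik j))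
                   + lam j *: Gadj (ik j) (x_ j) (G (ik j) (x_ j) - yd (ik j))).
Proof. by move=> j_gt0 /=; rewrite eqn0Ngt j_gt0. Qed.

Hypotheses (HX : inner_product_of ipX) (HY : inner_product_of ipY).
Hypothesis noise : pnorm (fun i => yd i - ydag i) <= delta.
Hypothesis F_xdag : forall i, F i xdag = ydag i.
Hypothesis G_xdag : pnorm (fun i => G i xdag - ydag i) <= Cmax.
Hypothesis rho_ge : Num.sqrt (rho_sq n eta lam LF LG etaF Cmax delta `|x1 - xdag| K) <= rho.
Hypotheses (F_C1 : forall i, C1_bounded_on (F i) B LF)
           (G_C1 : forall i, C1_bounded_on (G i) B LG).
Hypotheses (F_adj : forall i x, B x -> is_adjoint ipX ipY ('d (F i) x) (Fadj i x))
           (G_adj : forall i x, B x -> is_adjoint ipX ipY ('d (G i) x) (Gadj i x)).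
Hypothesis etaF_ge0 : 0 <= etaF.
Hypothesis tangential_cone : forall i x xt, B x -> B xt ->
  `|F i x - F i xt - 'd (F i) xt (x - xt)| <= etaF * `|F i x - F i xt|.
Hypotheses (eta_gt0 : forall k, (0 < k)%N -> 0 < eta k)
           (lam_gt0 : forall k, (0 < k)%N -> 0 < lam k)
           (step_small : forall k, (0 < k)%N -> LF ^+ 2 * eta k < 1 - etaF).

Let B_xdag : B xdag.
Proof. exact/cball_center/(le_trans (sqrtr_ge0 _) rho_ge). Qed.

Lemma G_lipschitz_xdag i x : B x -> `|G i x - G i xdag| <= `|LG| * `|x - xdag|.
Proof.
move=> Bx; have [dG bG _] := G_C1 i.
apply: (mean_value_le HY) => t t01; have Bt := cball_segment Bx t01; first exact: dG.
by move=> h; apply: le_trans (bG _ Bt h) _; rewrite ler_wpM2r // ler_norm.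
Qed.

Lemma sgd_step_le j i x : (0 < j)%N -> B x ->
  `|x - eta j *: (Fadj i x (F i x - yd i) + lam j *: Gadj i x (G i x - yd i)) - xdag| ^+ 2
    + C ^+ 2
  <= (1 + n%:R * c_coef eta lam LG j) * (`|x - xdag| ^+ 2 + C ^+ 2)
     + n%:R * delta ^+ 2 * d_coef eta LF etaF j.
Proof.
move=> j_gt0 Bx; rewrite addrAC.
set e := x - xdag; set r := F i x - yd i; set s := G i x - yd i; set nu := yd i - ydag i.
have [_ F_bnd _] := F_C1 i; have [_ G_bnd _] := G_C1 i.
have Cmax_ge0 : 0 <= Cmax := le_trans (pnorm_ge0 _) G_xdag.
have delta_ge0 : 0 <= delta := le_trans (pnorm_ge0 _) noise.
have sqrt_n : Num.sqrt n%:R ^+ 2 = n%:R :> R by rewrite sqr_sqrtr ?ler0n.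
have n_ge1 : 1 <= Num.sqrt n%:R ^+ 2 :> R.
  by rewrite sqrt_n ler1n (leq_ltn_trans _ (ltn_ord i)).
have cone : `|'d (F i) x e - (r + nu)| <= etaF * `|r + nu|.
  have rnu : r + nu = F i x - ydag i by rewrite addrA subrK.
  have := tangential_cone i B_xdag Bx; rewrite F_xdag rnu -[xdag - x]opprB linearN.
  by rewrite opprK addrC -(opprB (F i x)) normrN.
have s_le : `|s| <= `|LG| * `|e| + Num.sqrt n%:R * C.
  have -> : s = (G i x - G i xdag) + ((G i xdag - ydag i) - nu).
    by rewrite /s /nu opprB !subrKA.
  apply: le_trans (ler_normD _ _) _; rewrite mulrDr lerD ?G_lipschitz_xdag //.
  apply: le_trans (ler_normB _ _) _.
  by apply: lerD; [exact: pnorm_coord_le G_xdag | exact: pnorm_coord_le noise].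
have G_bnd_abs h : `|'d (G i) x h| <= `|LG| * `|h|.
  by apply: le_trans (G_bnd x Bx h) _; rewrite ler_wpM2r // ler_norm.
have landweber_le := landweber_term_le HX HY (F_adj i Bx) (F_bnd x Bx) (eta_gt0 j_gt0) etaF_ge0
  (step_small j_gt0) cone.
have penalty_le := penalty_term_le HX HY (G_adj i Bx) G_bnd_abs (eta_gt0 j_gt0) (lam_gt0 j_gt0)
  (normr_ge0 LG) (sqrtr_ge0 _) n_ge1 (addr_ge0 Cmax_ge0 delta_ge0) s_le.
rewrite sqrt_n real_normK ?num_real // -/(c_coef eta lam LG j) in penalty_le.
have nu_le : `|nu| ^+ 2 <= n%:R * delta ^+ 2 := pnorm_coord_sqr_le i noise.
have := ler_wpM2l (d_coef_ge0 (eta_gt0 j_gt0) (step_small j_gt0)) nu_le.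
have := normB_step_sqr_le HX e (Fadj i x r) (Gadj i x s) (eta j) (lam j).
rewrite /d_coef in landweber_le *; lra.
Qed.

Lemma sgd_in_cball k : (0 < k <= K)%N -> B (x_ k).
Proof.
set a := fun j => n%:R * c_coef eta lam LG j.
set b := fun j => n%:R * delta ^+ 2 * d_coef eta LF etaF j.
set Q := gronwall_bound a b (`|x1 - xdag| ^+ 2 + C ^+ 2).
have a_ge0 j : (0 < j)%N -> 0 <= a j.
  by move=> j_gt0; rewrite mulr_ge0 ?ler0n ?c_coef_ge0 ?eta_gt0 ?lam_gt0.
have b_ge0 j : (0 < j)%N -> 0 <= b j.
  by move=> j_gt0; rewrite mulr_ge0 ?d_coef_ge0 ?eta_gt0 ?step_small // mulr_ge0 ?ler0n ?sqr_ge0.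
have e1_ge0 : 0 <= `|x1 - xdag| ^+ 2 + C ^+ 2 by rewrite addr_ge0 ?sqr_ge0.
have Q_mono := gronwall_bound_nondecreasing a_ge0 b_ge0 e1_ge0.
have in_B j : (j <= K)%N -> `|x_ j - xdag| ^+ 2 + C ^+ 2 <= Q j -> B (x_ j).
  move=> jK E_le; apply: le_trans rho_ge.
  rewrite /cball /= -[`|_|]normr_id -sqrtr_sqr ler_wsqrtr //.
  by rewrite rho_sqE -/a -/b -/Q lerBrDr (le_trans E_le) // Q_mono // ltnW.
have E_le : forall j, (0 < j <= K)%N -> `|x_ j - xdag| ^+ 2 + C ^+ 2 <= Q j.
  apply: (discrete_gronwall a_ge0 b_ge0 e1_ge0) => // j /andP[j_gt0 jK] E_le.
  by rewrite sgdS //; apply/sgd_step_le/(in_B _ (ltnW jK) E_le).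
by move=> kK; apply: in_B (E_le k kK); case/andP: kK.
Qed.
End SgdIterates.

Theorem corollary3p2 (R : realType) (X Y : completeNormedModType R)
  (ipX : X -> X -> R) (ipY : Y -> Y -> R) (n : nat)
  (D : 'I_n -> set X) (F G : 'I_n -> X -> Y)
  (Fadj Gadj : 'I_n -> X -> Y -> X)
  (ydag : 'I_n -> Y) (ydelta : R -> 'I_n -> Y)
  (x1 xdag : X) (eta : nat -> R) (lam : R -> nat -> R) (kstop : R -> nat)
  (ik : nat -> 'I_n) (LF LG etaF Cmin Cmax delta : R) :
  (0 < n)%N ->
  inner_product_of ipX -> inner_product_of ipY ->
  (* noisy data *)
  (forall d, 0 < d -> pnorm (fun i => ydelta d i - ydag i) <= d) ->
  (* x^dagger : solution of F(x) = y^dagger of minimal distance to x_1 *)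
  ((forall i, D i xdag) /\ (forall i, F i xdag = ydag i)) ->
  (forall x, (forall i, D i x) -> (forall i, F i x = ydag i) ->
     `|xdag - x1| <= `|x - x1|) ->
  0 < delta ->
  let rho := Num.sqrt (rho_sq n eta (lam delta) LF LG etaF Cmax delta
                         `|x1 - xdag| (kstop delta)) in
  let B := cball xdag rho in
  (* (A) on the closed ball B_rho(x^dagger) *)
  (forall i, B `<=` D i) ->
  (forall i, C1_bounded_on (F i) B LF) ->
  (forall i, C1_bounded_on (G i) B LG) ->
  (forall i x, B x -> is_adjoint ipX ipY ('d (F i) x) (Fadj i x)) ->
  (forall i x, B x -> is_adjoint ipX ipY ('d (G i) x) (Gadj i x)) ->
  0 <= etaF < 1 ->
  (forall i x xt, B x -> B xt ->
     `|F i x - F i xt - 'd (F i) xt (x - xt)| <= etaF * `|F i x - F i xt|) ->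
  0 < Cmin -> Cmin <= Cmax ->
  (forall xs, B xs -> (forall i, D i xs) -> (forall i, F i xs = ydag i) ->
     Cmin <= pnorm (fun i => G i xs - ydag i) <= Cmax) ->
  (* (P) and step-size assumptions *)
  (forall k, (1 <= k)%N -> 0 < eta k) ->
  (forall d, 0 < d -> forall k, (1 <= k)%N -> 0 < lam d k) ->
  (forall k, (1 <= k)%N -> LF ^+ 2 * eta k < 1) ->
  (forall k, (1 <= k)%N -> LF ^+ 2 * eta k < 1 - etaF) ->
  (fun N => \sum_(1 <= k < N) eta k) @ \oo --> +oo ->
  (forall d, 0 < d -> cvg ((fun N => \sum_(1 <= k < N) eta k * lam d k) @ \oo)) ->
  (* behaviour as delta -> 0+ *)
  (forall k, (1 <= k)%N -> (fun d => lam d k) @ 0^'+ --> lam 0 k) ->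
  (forall N, \forall d \near 0^'+, (N <= kstop d)%N) ->
  (fun d => d ^+ 2 * \sum_(1 <= i < (kstop d).+1) eta i) @ 0^'+ --> 0 ->
  (* conclusion, for every realisation of the random indices i_k *)
  forall k, (1 <= k)%N -> (k <= kstop delta)%N ->
    B (sgd F G Fadj Gadj (ydelta delta) eta (lam delta) ik x1 k).
Proof.
move=> _ HX HY noise [D_xdag F_xdag] _ delta_gt0 rho B _ F_C1 G_C1 F_adj G_adj
  /andP[etaF_ge0 _] cone _ _ G_bounds eta_gt0 lam_gt0 _ step_small _ _ _ _ _ k k_ge1 kK.
have B_xdag : B xdag by exact/cball_center/sqrtr_ge0.
have /andP[_ G_xdag] := G_bounds xdag B_xdag D_xdag F_xdag.
apply: (sgd_in_cball ik HX HY (noise delta delta_gt0) F_xdag G_xdag (lexx rho)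
          F_C1 G_C1 F_adj G_adj etaF_ge0 cone eta_gt0 (lam_gt0 delta delta_gt0) step_small).
by rewrite k_ge1 kK.
Qed.
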